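(* Let $d_{\mathcal X}$ be a metric on $\mathcal X$, $Q$ a probability measure on $\mathcal Z$, and $P_{Z|X}$ a Markov kernel with $P_{Z|X}(\cdot|x)\ll Q$ for all $x$. If $P_{Z|X}$ satisfies $\varepsilon\cdot d_{\mathcal X}$-privacy, then for every $\alpha>1$ the PPR-compressed mechanism $x\mapsto((Z_i)_{i\ge1},K)$ satisfies $2\alpha\varepsilon\cdot d_{\mathcal X}$-privacy.
   Context: A Markov kernel $P_{W|X}$ satisfies $\varepsilon\cdot d_{\mathcal X}$-privacy if $\Pr(W\in S\mid X=x)\le e^{\varepsilon d_{\mathcal X}(x,x')}\Pr(W\in S\mid X=x')$ for all $x,x'\in\mathcal X$ and measurable $S$. PPR: let $Z_1,Z_2,\ldots$ be i.i.d. $\sim Q$, independent of the points $T_1\le T_2\le\cdots$ of a rate-$1$ Poisson process on $[0,\infty)$. For input $x$, with $P=P_{Z|X}(\cdot|x)$, set $\tilde T_i:=T_i(\frac{\mathrm dP}{\mathrm dQ}(Z_i))^{-1}$ ($:=\infty$ if the derivative is $0$, $\infty^{-\alpha}:=0$), and draw $K$ with $\Pr(K=k\mid (Z_i,T_i)_i)=\tilde T_k^{-\alpha}/\sum_i\tilde T_i^{-\alpha}$ (fresh randomness for each input). The PPR-compressed mechanism is the kernel $x\mapsto((Z_i)_{i\ge1},K)$; the shared sequence $(Z_i)$ does not depend on $x$. *)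

From HB Require Import structures.
From mathcomp Require Import all_boot all_order all_algebra.
From mathcomp Require Import all_classical all_reals all_analysis.
From mathcomp Require Import exponential_distribution.
Set Implicit Arguments. Unset Strict Implicit. Unset Printing Implicit Defensive.
Import Order.TTheory GRing.Theory Num.Theory.
Local Open Scope classical_set_scope.
Local Open Scope ring_scope.

Definition is_metric (R : realType) (X : Type) (d : X -> X -> R) : Prop :=
  [/\ (forall x y, 0 <= d x y),
      (forall x y, d x y = 0 <-> x = y),
      (forall x y, d x y = d y x) &
      (forall x y z, d x z <= d x y + d y z)].

Definition metric_privacy (R : realType) (X T : Type) (mT : set (set T))
    (K : X -> set T -> \bar R) (c : R) (d : X -> X -> R) : Prop :=
  forall x x' (S : set T), mT S ->
    (K x S <= (expR (c * d x x'))%:E * K x' S)%E.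

Definition is_RN_derivative (R : realType) (dz : measure_display)
    (Z : measurableType dz) (P Q : set Z -> \bar R) (f : Z -> R) : Prop :=
  [/\ (forall z, 0 <= f z), measurable_fun setT f &
      forall A, measurable A -> P A = (\int[Q]_(z in A) (f z)%:E)%E].

(* Randomness of PPR on a probability space (Omega, Pr):
   Z_0, Z_1, ... i.i.d. ~ Q and E_0, E_1, ... i.i.d. ~ Exp(1), all mutually
   independent (product rule for every finite subfamily; taking A i = setT
   or B i = setT gives the sub-families). *)
Definition ppr_randomness (R : realType) (dO dz : measure_display)
    (Omega : measurableType dO) (Pr : probability Omega R)
    (Z : measurableType dz) (Q : probability Z R)
    (Zs : nat -> Omega -> Z) (Es : nat -> Omega -> R) : Prop :=
  [/\ (forall i, measurable_fun setT (Zs i)),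
      (forall i, measurable_fun setT (Es i)) &
      forall (n : nat) (A : nat -> set Z) (B : nat -> set R),
        (forall i, measurable (A i)) -> (forall i, measurable (B i)) ->
        Pr (\bigcap_(i in [set k | (k < n)%N]) (Zs i @^-1` A i `&` Es i @^-1` B i))
        = (\prod_(i < n) (Q (A i) * exponential_prob 1 (B i)))%E].

(* Points T_1 <= T_2 <= ... of a rate-1 Poisson process on [0,oo):
   T_k = E_1 + ... + E_k (index shifted: ppr_time Es k = T_{k+1}). *)
Definition ppr_time (R : realType) (Omega : Type) (Es : nat -> Omega -> R)
    (k : nat) (w : Omega) : R :=
  \sum_(j < k.+1) Es j w.

(* tilde T_k ^ (-alpha) = ((dP/dQ)(Z_k) / T_k) ^ alpha   (= 0 if dP/dQ(Z_k) = 0) *)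
Definition ppr_weight (R : realType) (Omega Z : Type) (Zs : nat -> Omega -> Z)
    (Es : nat -> Omega -> R) (f : Z -> R) (alpha : R) (k : nat) (w : Omega) : R :=
  (f (Zs k w) / ppr_time Es k w) `^ alpha.

Definition ppr_weight_sum (R : realType) (Omega Z : Type) (Zs : nat -> Omega -> Z)
    (Es : nat -> Omega -> R) (f : Z -> R) (alpha : R) (w : Omega) : \bar R :=
  (\sum_(i <oo) (ppr_weight Zs Es f alpha i w)%:E)%E.

(* Pr(K = k | (Z_i, T_i)_i) = tilde T_k^(-alpha) / sum_i tilde T_i^(-alpha)
   (set to 0 on the null event where the normaliser is 0 or +oo) *)
Definition ppr_index_prob (R : realType) (Omega Z : Type) (Zs : nat -> Omega -> Z)
    (Es : nat -> Omega -> R) (f : Z -> R) (alpha : R) (k : nat) (w : Omega) : R :=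
  let s := ppr_weight_sum Zs Es f alpha w in
  if ((0 < s) && (s < +oo))%E then ppr_weight Zs Es f alpha k w / fine s else 0.

(* Law of the PPR output ((Z_i)_i, K) for input x, where f = dP_{Z|X}(.|x)/dQ:
   Pr(((Z_i)_i, K) in S) = E[ sum_k 1_S((Z_i)_i, k) Pr(K = k | (Z_i,T_i)_i) ] *)
Definition ppr_law (R : realType) (dO : measure_display) (Omega : measurableType dO)
    (Pr : probability Omega R) (Z : Type) (Zs : nat -> Omega -> Z)
    (Es : nat -> Omega -> R) (f : Z -> R) (alpha : R)
    (S : set ((nat -> Z) * nat)) : \bar R :=
  (\int[Pr]_w (\sum_(k <oo)
      ((\1_S ((fun i => Zs i w), k) : R) * ppr_index_prob Zs Es f alpha k w)%:E))%E.

(* Generators of the product sigma-algebra on Z^N x N (cylinder rectangles) *)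
Definition ppr_output_rects (dz : measure_display) (Z : measurableType dz)
    : set (set ((nat -> Z) * nat)) :=
  [set S | exists (i : nat) (A : set Z) (B : set nat),
     measurable A /\ S = [set p | A (p.1 i) /\ B p.2]].

From HB Require Import structures.
From mathcomp Require Import all_boot all_order all_algebra.
From mathcomp Require Import all_classical all_reals all_analysis.
From mathcomp Require Import exponential_distribution measurable_realfun.
From mathcomp Require Import ring.
Import Order.TTheory GRing.Theory Num.Theory.
Local Open Scope classical_set_scope.
Local Open Scope ring_scope.
Set Implicit Arguments. Unset Strict Implicit.

(* Privacy of P_{Z|X} at level eps d(x,x') turns, via Radon-Nikodym densities,
   into the pointwise bound dP_x/dQ <= c dP_x'/dQ (and symmetrically) outside a
   Q-null set, with c = exp(eps d(x,x')).  Since the Z_i have law Q and the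
   arrival times are nonnegative, almost surely every PPR weight
   ((dP/dQ)(Z_k) / T_k)^alpha moves by a factor at most c^alpha when x is
   replaced by x', and so does their sum; hence each selection probability
   moves by at most c^(2 alpha) = exp(2 alpha eps d(x,x')), and integrating
   over the shared randomness gives the bound on the law of ((Z_i)_i, K). *)

(* Through [powR], whose measurability the library provides. *)
Lemma measurable_invR (R : realType) : measurable_fun setT (@GRing.inv R).
Proof.
have -> : @GRing.inv R = (fun x => if x < 0 then - ((- x) `^ (-1)) else x `^ (-1)).
  apply/funext => x; case: ifPn => x0.
  - by rewrite powR_inv1 ?oppr_ge0 ?ltW // invrN opprK.
  - by rewrite powR_inv1 // leNgt.
apply: measurable_fun_ifT.
- exact: measurable_fun_ltr.
- by apply/measurable_funN/(measurableT_comp (measurable_powR _)); exact: measurable_funN.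
- exact: measurable_powR.
Qed.

Lemma measurable_ler_set (R : realType) d (T : measurableType d) (f g : T -> R) :
  measurable_fun setT f -> measurable_fun setT g -> measurable [set z | f z <= g z].
Proof.
move=> mf mg; have := measurable_fun_ler mf mg measurableT (I : measurable [set true]).
by rewrite setTI preimage_true.
Qed.

Section density_comparison.
Variables (R : realType) (dz : measure_display) (Z : measurableType dz).
Variables (Q P1 P2 : probability Z R) (f g : Z -> R) (c : R).
Hypotheses (Pf : is_RN_derivative P1 Q f) (Pg : is_RN_derivative P2 Q g).
Hypotheses (c0 : 0 <= c) (P12 : forall A, measurable A -> (P1 A <= c%:E * P2 A)%E).

Let mf : measurable_fun setT f. Proof. by case: Pf. Qed.
Let mg : measurable_fun setT g. Proof. by case: Pg. Qed.

Let measurable_gap (e : R) : measurable [set z | c * g z + e <= f z].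
Proof. by apply: measurable_ler_set mf; apply: measurable_funD => //; exact: measurable_funM. Qed.

(* Integrating [c g + e <= f] over the set N where it holds gives
   [c P2 N + e Q N <= P1 N <= c P2 N]. *)
Lemma density_gap_null (e : R) : 0 < e -> Q [set z | c * g z + e <= f z] = 0%E.
Proof.
move=> e0; set N := [set z | _ <= _]; have mN := measurable_gap e.
have [g0 _ Pg2] := Pg; have [_ _ Pf1] := Pf.
have intN (h : Z -> R) : measurable_fun setT h ->
    measurable_fun N (fun z => (h z)%:E).
  by move=> mh; apply/measurableT_comp => //; exact: measurable_funS mh.
have mcg : measurable_fun N (fun z => (c * g z)%:E).
  by apply: intN; exact: measurable_funM.
have lhsE : (c%:E * P2 N + e%:E * Q N)%E =
    (\int[Q]_(z in N) ((c * g z)%:E + (cst e%:E) z))%E.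
  rewrite ge0_integralD //=.
  - rewrite integral_cst // (Pg2 _ mN) -ge0_integralZl_EFin //.
    + by move=> z _; rewrite lee_fin.
    + exact: intN.
  - by move=> z _; rewrite lee_fin mulr_ge0.
  - by move=> z _; rewrite lee_fin ltW.
have gap : (c%:E * P2 N + e%:E * Q N <= c%:E * P2 N)%E.
  apply: le_trans (P12 mN); rewrite lhsE (Pf1 _ mN).
  apply: ge0_le_integral => //.
  - by move=> z _; rewrite /= adde_ge0 // lee_fin ?mulr_ge0 // ltW.
  - by apply: emeasurable_funD => //; exact: measurable_cst.
  - exact: intN.
have fin : (c%:E * P2 N)%E \is a fin_num by rewrite fin_numM // fin_num_measure.
move: gap; rewrite -[X in (_ <= X)%E]adde0 leeD2lE // => gap.
apply/eqP; rewrite eq_le measure_ge0 andbT.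
by rewrite -(@lee_pmul2l _ e%:E) ?lte_fin // mule0.
Qed.

Lemma density_ratio_null :
  measurable [set z | c * g z < f z] /\ Q [set z | c * g z < f z] = 0%E.
Proof.
have eN : [set z | c * g z < f z] = \bigcup_n [set z | c * g z + n.+1%:R^-1 <= f z].
  apply/seteqP; split => z /=.
    by move=> /ltr_add_invr [k hk]; exists k => //; exact: ltW.
  by move=> [k _]; apply: lt_le_trans; rewrite ltrDl invr_gt0.
rewrite eN; split; first exact: bigcup_measurable.
apply/negligibleP; first exact: bigcup_measurable.
apply: negligible_bigcup => k.
by apply/negligibleP => //; apply: density_gap_null; rewrite invr_gt0.
Qed.

End density_comparison.

Lemma exponential_prob_lt0 (R : realType) : exponential_prob (1 : R) `]-oo, 0[ = 0%E.
Proof.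
rewrite /exponential_prob integral0_eq // => x; rewrite /= in_itv /= => x0.
by rewrite /exponential_pdf patchE ifF // memNset //= in_itv /= leNgt x0.
Qed.

Lemma ppr_randomness_marginal (R : realType) (dO dz : measure_display)
    (Omega : measurableType dO) (Pr : probability Omega R)
    (Z : measurableType dz) (Q : probability Z R)
    (Zs : nat -> Omega -> Z) (Es : nat -> Omega -> R) (i : nat) (A : set Z) (B : set R) :
  ppr_randomness Pr Q Zs Es -> measurable A -> measurable B ->
  Pr (Zs i @^-1` A `&` Es i @^-1` B) = (Q A * exponential_prob 1 B)%E.
Proof.
move=> [_ _ indep] mA mB.
pose A' k := if k == i then A else setT.
pose B' k := if k == i then B else setT.
have := indep i.+1 A' B'.
have -> : \bigcap_(k in [set k | (k < i.+1)%N]) (Zs k @^-1` A' k `&` Es k @^-1` B' k)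
    = Zs i @^-1` A `&` Es i @^-1` B.
  apply/seteqP; split => w /=.
    by move=> /(_ i (ltnSn i)); rewrite /A' /B' eqxx.
  by move=> [hA hB] k _; rewrite /A' /B'; case: eqP => [->|].
rewrite big_ord_recr /= /A' /B' eqxx => -> //; last by move=> k; case: eqP.
- rewrite big1 ?mul1e // => k _; rewrite ltn_eqF // probability_setT mul1e.
  by rewrite /exponential_prob integral_exponential_pdf.
- by move=> k; case: eqP.
Qed.

Section ppr_pointwise.
Variables (R : realType) (Omega Z : Type) (Zs : nat -> Omega -> Z) (Es : nat -> Omega -> R).
Variables (alpha c : R) (w : Omega).
Hypotheses (alpha0 : 0 < alpha) (c0 : 0 <= c) (Es_ge0 : forall n, 0 <= Es n w).

Let ppr_time_ge0 k : 0 <= ppr_time Es k w.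
Proof. exact: sumr_ge0. Qed.

Lemma ppr_weight_ge0 (h : Z -> R) k : 0 <= ppr_weight Zs Es h alpha k w.
Proof. exact: powR_ge0. Qed.

Lemma ppr_weight_sum_ge0 (h : Z -> R) : (0 <= ppr_weight_sum Zs Es h alpha w)%E.
Proof. by apply: nneseries_ge0 => n _ _; rewrite lee_fin ppr_weight_ge0. Qed.

Lemma ppr_index_prob_ge0 (h : Z -> R) k : 0 <= ppr_index_prob Zs Es h alpha k w.
Proof.
rewrite /ppr_index_prob; case: ifP => // _.
by rewrite divr_ge0 ?ppr_weight_ge0 // fine_ge0 // ppr_weight_sum_ge0.
Qed.

Section comparison.
Variables (f g : Z -> R).
Hypotheses (f0 : forall z, 0 <= f z) (g0 : forall z, 0 <= g z).

Lemma ppr_weight_le k : f (Zs k w) <= c * g (Zs k w) ->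
  ppr_weight Zs Es f alpha k w <= c `^ alpha * ppr_weight Zs Es g alpha k w.
Proof.
move=> fg; rewrite /ppr_weight -powRM ?divr_ge0 //.
apply: ge0_ler_powR; rewrite ?nnegrE ?mulr_ge0 ?divr_ge0 ?invr_ge0 ?(ltW alpha0) //.
by rewrite mulrA ler_wpM2r // invr_ge0.
Qed.

Lemma ppr_weight_sum_le : (forall k, f (Zs k w) <= c * g (Zs k w)) ->
  (ppr_weight_sum Zs Es f alpha w <= (c `^ alpha)%:E * ppr_weight_sum Zs Es g alpha w)%E.
Proof.
move=> fg; rewrite /ppr_weight_sum -nneseriesZl => [|i _]; last first.
  by rewrite lee_fin ppr_weight_ge0.
apply: lee_nneseries => [i _ _|n _]; first by rewrite lee_fin ppr_weight_ge0.
by rewrite -EFinM lee_fin ppr_weight_le.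
Qed.

End comparison.

(* Numerator and normaliser each cost one factor [c ^ alpha]; the two-sided
   hypothesis makes the normaliser for [g] positive and finite whenever the
   one for [f] is, so the junk value 0 never appears on the right only. *)
Lemma ppr_index_prob_le (f g : Z -> R) k :
  (forall z, 0 <= f z) -> (forall z, 0 <= g z) ->
  (forall k, f (Zs k w) <= c * g (Zs k w)) -> (forall k, g (Zs k w) <= c * f (Zs k w)) ->
  ppr_index_prob Zs Es f alpha k w <=
    c `^ alpha * c `^ alpha * ppr_index_prob Zs Es g alpha k w.
Proof.
move=> f0 g0 fg gf; set C := c `^ alpha; have C0 : 0 <= C := powR_ge0 _ _.
rewrite /ppr_index_prob.
set s := ppr_weight_sum _ _ f _ _; set s' := ppr_weight_sum _ _ g _ _.
have ss' : (s <= C%:E * s')%E := ppr_weight_sum_le f0 g0 fg.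
have s's : (s' <= C%:E * s)%E := ppr_weight_sum_le g0 f0 gf.
case: ifPn => [/andP[s0 soo]|_]; last by rewrite !mulr_ge0 // ppr_index_prob_ge0.
have sfin : s \is a fin_num by rewrite ge0_fin_numE // ltW.
have s'oo : (s' < +oo)%E by apply: le_lt_trans s's _; rewrite -(fineK sfin) -EFinM ltry.
have s'0 : (0 < s')%E.
  rewrite lt_neqAle ppr_weight_sum_ge0 andbT; apply: contraTneq ss' => <-.
  by rewrite mule0 -ltNge.
rewrite s'0 s'oo /=.
have s_gt0 : 0 < fine s by apply: fine_gt0; rewrite s0 soo.
have s'_gt0 : 0 < fine s' by apply: fine_gt0; rewrite s'0 s'oo.
have s's_fine : fine s' <= C * fine s.
  by rewrite -lee_fin EFinM !fineK // ge0_fin_numE // ltW.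
rewrite ler_pdivrMr //; apply: (le_trans (ppr_weight_le f0 g0 (fg k))).
set W := ppr_weight _ _ g _ _ _.
have -> : C * C * (W / fine s') * fine s = C * W * (C * fine s / fine s') by ring.
apply: ler_peMr; first by rewrite mulr_ge0 // ppr_weight_ge0.
by rewrite ler_pdivlMr // mul1r.
Qed.

End ppr_pointwise.

Definition ppr_output_mass (R : realType) (Omega Z : Type) (Zs : nat -> Omega -> Z)
    (Es : nat -> Omega -> R) (f : Z -> R) (alpha : R) (S : set ((nat -> Z) * nat))
    (w : Omega) : \bar R :=
  (\sum_(k <oo) ((\1_S ((fun i => Zs i w), k) : R) * ppr_index_prob Zs Es f alpha k w)%:E)%E.

Lemma ppr_output_mass_ge0 (R : realType) (Omega Z : Type) (Zs : nat -> Omega -> Z)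
    (Es : nat -> Omega -> R) (f : Z -> R) (alpha : R) S w :
  (0 <= ppr_output_mass Zs Es f alpha S w)%E.
Proof.
by apply: nneseries_ge0 => k _ _; rewrite lee_fin mulr_ge0 // ppr_index_prob_ge0.
Qed.

Lemma ppr_output_mass_le (R : realType) (Omega Z : Type) (Zs : nat -> Omega -> Z)
    (Es : nat -> Omega -> R) (f g : Z -> R) (alpha c : R) S w :
  0 < alpha -> 0 <= c -> (forall n, 0 <= Es n w) ->
  (forall z, 0 <= f z) -> (forall z, 0 <= g z) ->
  (forall k, f (Zs k w) <= c * g (Zs k w)) -> (forall k, g (Zs k w) <= c * f (Zs k w)) ->
  (ppr_output_mass Zs Es f alpha S w <=
    (c `^ alpha * c `^ alpha)%:E * ppr_output_mass Zs Es g alpha S w)%E.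
Proof.
move=> alpha0 c0 Es0 f0 g0 fg gf.
rewrite /ppr_output_mass -nneseriesZl => [|k _]; last first.
  by rewrite lee_fin mulr_ge0 // ppr_index_prob_ge0.
apply: lee_nneseries => [k _ _|k _]; first by rewrite lee_fin mulr_ge0 // ppr_index_prob_ge0.
by rewrite -EFinM lee_fin mulrCA ler_wpM2l // ppr_index_prob_le.
Qed.

Lemma measurable_ppr_output_event (dz dO : measure_display) (Z : measurableType dz)
    (Omega : measurableType dO) (Zs : nat -> Omega -> Z) :
  (forall i, measurable_fun setT (Zs i)) ->
  forall S, (<<s @ppr_output_rects dz Z >>) S ->
  forall k, measurable [set w | S ((fun i => Zs i w), k)].
Proof.
move=> mZ S; apply: (@smallest_sub _ _ _
  [set S | forall k, measurable [set w | S ((fun i => Zs i w), k)]]) => [|_ [i [A [B [mA ->]]]] k].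
  split => [k|A mA k|F mF k] /=.
  - by rewrite [X in measurable X](_ : _ = set0) //; apply/seteqP; split.
  - rewrite [X in measurable X](_ : _ = ~` [set w | A ((fun i => Zs i w), k)]).
      exact: measurableC.
    by apply/seteqP; split => w /=; [move=> [] | ].
  - rewrite [X in measurable X](_ : _ = \bigcup_n [set w | F n ((fun i => Zs i w), k)]).
      by apply: bigcup_measurable => n _; exact: mF.
    by apply/seteqP; split => w /=.
have [Bk|nBk] := pselect (B k); last first.
  by rewrite [X in measurable X](_ : _ = set0) //; apply/seteqP; split => w //= [].
rewrite [X in measurable X](_ : _ = Zs i @^-1` A); last by apply/seteqP; split => w /=; [case|].
by rewrite -[_ @^-1` _]setTI; exact: mZ.
Qed.

Section ppr_measurability.
Variables (R : realType) (dO dz : measure_display) (Omega : measurableType dO)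
  (Z : measurableType dz) (Zs : nat -> Omega -> Z) (Es : nat -> Omega -> R).
Hypotheses (mZ : forall i, measurable_fun setT (Zs i))
  (mE : forall i, measurable_fun setT (Es i)).
Variables (f : Z -> R) (alpha : R).
Hypothesis mf : measurable_fun setT f.

Lemma measurable_ppr_time k : measurable_fun setT (ppr_time Es k).
Proof. exact: (@measurable_sum _ _ R setT _ _ (fun j : 'I_k.+1 => Es j)). Qed.

Lemma measurable_ppr_weight k : measurable_fun setT (ppr_weight Zs Es f alpha k).
Proof.
apply: (measurableT_comp (measurable_powR _)); apply: measurable_funM.
  exact: measurableT_comp.
exact: measurableT_comp (@measurable_invR R) (measurable_ppr_time k).
Qed.

Lemma measurable_ppr_weight_sum : measurable_fun setT (ppr_weight_sum Zs Es f alpha).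
Proof.
apply: ge0_emeasurable_sum => [k w _ _|k _]; first by rewrite lee_fin powR_ge0.
by apply: measurableT_comp => //; exact: measurable_ppr_weight.
Qed.

Lemma measurable_ppr_index_prob k : measurable_fun setT (ppr_index_prob Zs Es f alpha k).
Proof.
apply: measurable_fun_ifT; last exact: measurable_cst.
- by apply: measurable_and; apply: measurable_fun_lte => //; exact: measurable_ppr_weight_sum.
- apply: measurable_funM; first exact: measurable_ppr_weight.
  apply: measurableT_comp; first exact: measurable_invR.
  by apply: measurableT_comp; [exact: fine_measurable|exact: measurable_ppr_weight_sum].
Qed.

Lemma measurable_ppr_output_mass S : (<<s @ppr_output_rects dz Z >>) S ->
  measurable_fun setT (ppr_output_mass Zs Es f alpha S).
Proof.
move=> mS; apply: ge0_emeasurable_sum => [k w _ _|k _].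
  by rewrite lee_fin mulr_ge0 // ppr_index_prob_ge0.
apply/measurableT_comp/measurable_funM => //; last exact: measurable_ppr_index_prob.
exact/measurable_indic/measurable_ppr_output_event.
Qed.

End ppr_measurability.

Lemma ppr_law_le (R : realType) (dO dz : measure_display) (Omega : measurableType dO)
    (Pr : probability Omega R) (Z : measurableType dz)
    (Zs : nat -> Omega -> Z) (Es : nat -> Omega -> R) (f g : Z -> R) (alpha K : R) S :
  (forall i, measurable_fun setT (Zs i)) -> (forall i, measurable_fun setT (Es i)) ->
  measurable_fun setT f -> measurable_fun setT g -> (<<s @ppr_output_rects dz Z >>) S ->
  0 <= K ->
  {ae Pr, forall w, (ppr_output_mass Zs Es f alpha S w <=
                      K%:E * ppr_output_mass Zs Es g alpha S w)%E} ->
  (ppr_law Pr Zs Es f alpha S <= K%:E * ppr_law Pr Zs Es g alpha S)%E.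
Proof.
move=> mZ mE mf mg mS K0 fg.
have mF h : measurable_fun setT h ->
    measurable_fun setT (ppr_output_mass Zs Es h alpha S).
  by move=> mh; exact: measurable_ppr_output_mass.
have F0 h w (_ : setT w) := @ppr_output_mass_ge0 _ _ _ Zs Es h alpha S w.
rewrite -(ge0_integralZl_EFin _ measurableT (F0 g) (mF g mg) K0).
apply: (ae_ge0_le_integral measurableT (F0 f) (mF f mf)) => //.
- by move=> w _; rewrite mule_ge0 // ?lee_fin // F0.
- exact: measurable_funeM (mF g mg).
by apply: filterS fg => w + _.
Qed.

Section ppr_almost_surely.
Variables (R : realType) (dO dz : measure_display) (Omega : measurableType dO)
  (Pr : probability Omega R) (Z : measurableType dz) (Q : probability Z R)
  (Zs : nat -> Omega -> Z) (Es : nat -> Omega -> R).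
Hypothesis rand : ppr_randomness Pr Q Zs Es.

Let ae_not_joint (A : set Z) (B : set R) : measurable A -> measurable B ->
  (Q A * exponential_prob 1 B)%E = 0%E ->
  {ae Pr, forall w n, ~ (A (Zs n w) /\ B (Es n w))}.
Proof.
move=> mA mB null; apply: ae_foralln => n.
have [mZ mE _] := rand.
apply: (@negligibleS _ _ _ _ (Zs n @^-1` A `&` Es n @^-1` B)) => [w /= /contrapT //|].
have mAB : measurable (Zs n @^-1` A `&` Es n @^-1` B).
  by apply: measurableI; rewrite -[_ @^-1` _]setTI; [exact: mZ|exact: mE].
apply/negligibleP => //.
exact: eq_trans (ppr_randomness_marginal n rand mA mB) null.
Qed.

Lemma ppr_Zs_ae_notin (N : set Z) : measurable N -> Q N = 0%E ->
  {ae Pr, forall w n, ~ N (Zs n w)}.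
Proof.
move=> mN QN; apply: filterS (ae_not_joint mN measurableT _) => [w + n Nw|].
  by move/(_ n); apply.
by rewrite QN mul0e.
Qed.

Lemma ppr_Es_ae_ge0 : {ae Pr, forall w n, 0 <= Es n w}.
Proof.
apply: filterS (ae_not_joint measurableT (measurable_itv `]-oo, 0[) _) => [w + n|].
  by move/(_ n); rewrite /= in_itv /= leNgt => nlt; apply/negP => lt0; exact: nlt.
by rewrite exponential_prob_lt0 mule0.
Qed.

End ppr_almost_surely.

Theorem theorem4 (R : realType) (X : Type) (dX : X -> X -> R)
    (dz : measure_display) (Z : measurableType dz) (Q : probability Z R)
    (P : X -> probability Z R) (dPdQ : X -> Z -> R) (eps : R)
    (dO : measure_display) (Omega : measurableType dO) (Pr : probability Omega R)
    (Zs : nat -> Omega -> Z) (Es : nat -> Omega -> R) :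
  is_metric dX ->
  (forall x, P x `<< Q) ->
  (forall x, is_RN_derivative (P x) Q (dPdQ x)) ->
  ppr_randomness Pr Q Zs Es ->
  metric_privacy measurable (fun x => (P x : set Z -> \bar R)) eps dX ->
  forall alpha : R, 1 < alpha ->
  metric_privacy (<<s @ppr_output_rects dz Z >>)
    (fun x => ppr_law Pr Zs Es (dPdQ x) alpha) (2 * alpha * eps) dX.
Proof.
move=> [_ _ dsym _] _ RN rand priv alpha alpha1 x x' S mS.
have alpha0 : 0 < alpha := lt_trans ltr01 alpha1.
set c := expR (eps * dX x x'); have c0 : 0 <= c := expR_ge0 _.
have [mN1 QN1] := density_ratio_null (RN x) (RN x') c0 (priv x x').
have [mN2 QN2] : measurable [set z | c * dPdQ x z < dPdQ x' z] /\
    Q [set z | c * dPdQ x z < dPdQ x' z] = 0%E.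
  by apply: density_ratio_null (RN x') (RN x) c0 _ => A; rewrite /c dsym; exact: priv.
have [f0 mf _] := RN x; have [g0 mg _] := RN x'; have [mZ mE _] := rand.
have -> : expR (2 * alpha * eps * dX x x') = c `^ alpha * c `^ alpha.
  by rewrite /powR gt_eqF ?expR_gt0 // expRK -expRD /c; congr expR; ring.
apply: ppr_law_le => //; first by rewrite mulr_ge0 // powR_ge0.
have := ppr_Zs_ae_notin rand mN1 QN1; have := ppr_Zs_ae_notin rand mN2 QN2.
apply: filterS3 (ppr_Es_ae_ge0 rand) => w Es0 gf fg.
by apply: ppr_output_mass_le => // n; rewrite leNgt; apply/negP; [apply: fg|apply: gf].
Qed.
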